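(* Let $S^{\max}$, $L$ and $\mathcal{I}$ be as in the context. For all $\sigma,\sigma'\in\mathbb{T}$ with $\sigma\preceq\sigma'$, we have $\mathcal{I}(\sigma)\supseteq\mathcal{I}(\sigma')$.
   Context: Let $E$ be a set of events. A trace is a finite sequence $\sigma=\sigma_0\cdots\sigma_{n-1}$ ($n\ge 0$) or an infinite sequence $\sigma_0\sigma_1\cdots$ of events; $|\sigma|$ is its length ($\infty$ if infinite) and $\mathbb{T}$ is the set of all traces (including the empty trace). Write $\sigma\preceq\sigma'$ iff $|\sigma|\le|\sigma'|$ and $\sigma_i=\sigma'_i$ for all $0\le i<|\sigma|$ (prefix order). For $P\subseteq\mathbb{T}$, $\mathrm{pf}(P)=\{\sigma'\in\mathbb{T}\mid\exists\sigma\in P.\ \sigma'\preceq\sigma\}$. Fix $S^{\max}\subseteq\mathbb{T}$ and let $S^{\mathrm{pf}}=\mathrm{pf}(S^{\max})$ (valid traces). For $P\subseteq\mathbb{T}$, $\alpha(P)=\{\sigma\in\mathrm{pf}(P)\mid\forall\sigma'\in S^{\max}.\ \sigma\preceq\sigma'\Rightarrow\sigma'\in P\}$. Let $L\subseteq\wp(S^{\max})$ with $S^{\max},\emptyset\in L$ be such that $(L,\subseteq)$ is a complete lattice with top $S^{\max}$, bottom $\emptyset$, join $\sqcup$ and meet $\sqcap$ (least upper bounds / greatest lower bounds in $L$ w.r.t. $\subseteq$, not necessarily $\cup,\cap$). The inquiry function is $\mathcal{I}(\sigma)=\sqcap\{P\in L\mid \sigma\in\alpha(P)\}$ for $\sigma\in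 S^{\mathrm{pf}}$, and $\mathcal{I}(\sigma)=\emptyset$ for $\sigma\notin S^{\mathrm{pf}}$. *)

Set Implicit Arguments.

(* A trace over events E: a sequence nat -> option E that is "None-closed
   upwards": once it stops (None), it stays stopped. Finite traces of length n
   have Some at positions < n and None from n on; infinite traces are Some
   everywhere; the empty trace is constantly None. *)
Definition is_trace (E : Type) (s : nat -> option E) : Prop :=
  forall n, s n = None -> s (S n) = None.

Definition trace (E : Type) := { s : nat -> option E | is_trace s }.

Definition at_ (E : Type) (s : trace E) (n : nat) : option E := proj1_sig s n.

Definition tset (E : Type) := trace E -> Prop.

Definition subset (E : Type) (P Q : tset E) : Prop := forall s, P s -> Q s.

(* Prefix order: |s| <= |s'| and s_i = s'_i for i < |s|.  With the
   representation above this says: every defined position of s is defined in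
   s' with the same event. *)
Definition prefix (E : Type) (s s' : trace E) : Prop :=
  forall i, at_ s i = None \/ at_ s' i = at_ s i.

Definition pf (E : Type) (P : tset E) : tset E :=
  fun s' => exists s, P s /\ prefix s' s.

Definition alpha (E : Type) (Smax P : tset E) : tset E :=
  fun s => pf P s /\ (forall s', Smax s' -> prefix s s' -> P s').

Definition is_glb (E : Type) (L : tset E -> Prop) (F : tset E -> Prop)
  (m : tset E) : Prop :=
  L m /\ (forall P, F P -> subset m P) /\
  (forall Q, L Q -> (forall P, F P -> subset Q P) -> subset Q m).

Definition is_lub (E : Type) (L : tset E -> Prop) (F : tset E -> Prop)
  (j : tset E) : Prop :=
  L j /\ (forall P, F P -> subset P j) /\
  (forall Q, L Q -> (forall P, F P -> subset P Q) -> subset j Q).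

Definition complete_lattice (E : Type) (L : tset E -> Prop) : Prop :=
  forall F, (forall P, F P -> L P) ->
    (exists m, is_glb L F m) /\ (exists j, is_lub L F j).

Definition inquiry (E : Type) (Smax : tset E) (L : tset E -> Prop)
  (meet : (tset E -> Prop) -> tset E) (s : trace E) : tset E :=
  fun t => pf Smax s /\ meet (fun P => L P /\ alpha Smax P s) t.

(* If σ ∈ α(P) and σ ⪯ σ' with σ' valid, then σ' ∈ α(P) as well, since every
   maximal extension of σ' extends σ.  Hence the family of P ∈ L whose meet
   defines I(σ') contains the one defining I(σ), and a meet over a larger
   family is smaller. *)


Lemma prefix_trans {E : Type} {a b c : trace E} :
  prefix a b -> prefix b c -> prefix a c.
Proof.
  intros Hab Hbc i.
  destruct (Hab i) as [Ha | Ha]; [now left |].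
  destruct (Hbc i) as [Hb | Hb].
  - left. now rewrite <- Ha.
  - right. now rewrite Hb.
Qed.

Lemma pf_prefix {E : Type} {P : tset E} {s s' : trace E} :
  prefix s s' -> pf P s' -> pf P s.
Proof.
  intros Hss' [x [Hx Hs'x]].
  exists x. split; [exact Hx | exact (prefix_trans Hss' Hs'x)].
Qed.

Lemma alpha_prefix {E : Type} {Smax P : tset E} {s s' : trace E} :
  prefix s s' -> pf Smax s' -> alpha Smax P s -> alpha Smax P s'.
Proof.
  intros Hss' [x [Hx Hs'x]] [_ Hext].
  assert (Hext' : forall y, Smax y -> prefix s' y -> P y).
  { intros y Hy Hs'y. apply Hext; [exact Hy | exact (prefix_trans Hss' Hs'y)]. }
  split; [| exact Hext'].
  exists x. split; [apply Hext'; [exact Hx | exact Hs'x] | exact Hs'x].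
Qed.

Lemma glb_antitone {E : Type} {L F G : tset E -> Prop} {m m' : tset E} :
  (forall P, F P -> G P) -> is_glb L F m -> is_glb L G m' -> subset m' m.
Proof.
  intros HFG [_ [_ Hm_greatest]] [HLm' [Hm'_lower _]].
  apply Hm_greatest; [exact HLm' |].
  intros P HP. apply Hm'_lower, HFG, HP.
Qed.

Theorem lemma2 (E : Type) (Smax : tset E) (L : tset E -> Prop)
  (meet : (tset E -> Prop) -> tset E)
  (HLsub : forall P, L P -> subset P Smax)
  (HLtop : L Smax)
  (HLbot : L (fun _ => False))
  (HLcl : complete_lattice L)
  (Hmeet : forall F, (forall P, F P -> L P) -> is_glb L F (meet F)) :
  forall s s' : trace E, prefix s s' ->
    subset (inquiry Smax L meet s') (inquiry Smax L meet s).
Proof.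
  intros s s' Hss' t [Hvalid' Ht].
  split; [exact (pf_prefix Hss' Hvalid') |].
  set (F := fun P => L P /\ alpha Smax P s).
  set (F' := fun P => L P /\ alpha Smax P s').
  assert (HFF' : forall P, F P -> F' P).
  { intros P [HLP HP]. split; [exact HLP | exact (alpha_prefix Hss' Hvalid' HP)]. }
  apply (glb_antitone HFF' (Hmeet F (fun P HP => proj1 HP))
                           (Hmeet F' (fun P HP => proj1 HP))).
  exact Ht.
Qed.
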